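(* Let $(G,\mathcal{C})$ be a 2-colored graph, $G=(V,E)$, and let $l,u:E\to\mathbb{N}$ satisfy $l(e)\le u(e)$ for all $e\in E$. If there exists a rational vector $x\in\mathcal{A}(G,\mathcal{C})$ with $l(e)\le x(e)\le u(e)$ for all $e\in E$, then there exists an integral vector $y\in\mathcal{A}(G,\mathcal{C})$ with $2l(e)\le y(e)\le 2u(e)$ for all $e\in E$.
   Context: Graphs are finite, undirected, may have parallel edges but no loops; $\mathcal{C}:E\to\{R,B\}$ is a red/blue edge coloring. The alternating cone $\mathcal{A}(G,\mathcal{C})\subseteq\mathbb{R}^E$ is the set of $x$ with $x(e)\ge0$ for all $e$ and, at every vertex $v$, the sum of $x(e)$ over red edges at $v$ equals the sum of $x(e)$ over blue edges at $v$. *)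

From mathcomp Require Import all_boot all_order all_algebra.
Set Implicit Arguments. Unset Strict Implicit. Unset Printing Implicit Defensive.
Import Order.TTheory GRing.Theory Num.Theory.
Local Open Scope ring_scope.

(* A multigraph without loops: vertex type V, edge type E (finite), each edge
   e has endpoints src e and dst e with src e != dst e (parallel edges allowed).
   A 2-coloring is col : E -> bool, with true = red (R), false = blue (B). *)

Definition incident (V E : finType) (src dst : E -> V) (v : V) (e : E) : bool :=
  (src e == v) || (dst e == v).

Definition in_alt_cone (R : numDomainType) (V E : finType) (src dst : E -> V)
  (col : E -> bool) (x : E -> R) : Prop :=
  (forall e, 0 <= x e) /\
  (forall v : V, \sum_(e | incident src dst v e && col e) x e
               = \sum_(e | incident src dst v e && ~~ col e) x e).

From mathcomp Require Import all_boot all_order all_algebra zify lra.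
Set Implicit Arguments. Unset Strict Implicit. Unset Printing Implicit Defensive.
Import Order.TTheory GRing.Theory Num.Theory.

Local Open Scope ring_scope.

(* Double the graph: the cover has vertex set V * bool, and each edge uv gives two arcs,
   (u, true) -> (v, false) and (v, true) -> (u, false) if it is red, and the reversed
   arcs if it is blue. Copying x onto both arcs of every edge yields a circulation of the
   cover within the integer bounds [l, u]; such bounds admit an integral circulation, and
   adding up the two arcs of each edge gives the required y, within [2 l, 2 u].
   The integral circulation is reached by removing fractional arcs one at a time.
   Every vertex on a fractional arc lies on at least two, so at most as many vertices as
   fractional arcs are involved; as the conservation equations sum to zero, one of them
   is redundant, and the remaining ones have a nonzero solution D supported on the
   fractional arcs. Moving along D until some arc reaches a bound makes that arc integral. *)

Lemma exists_kernel_vector (K : fieldType) (I J : finType)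
    (S : {set I}) (T : {set J}) (a : I -> J -> K) :
  (#|T| < #|S|)%N ->
  exists d : I -> K, [/\ exists i, d i != 0, forall i, d i != 0 -> i \in S
    & forall j, j \in T -> \sum_i d i * a i j = 0].
Proof.
move=> ltTS; have [s0 s0S] : exists s0, s0 \in S by apply/card_gt0P; lia.
pose M : 'M[K]_(#|S|, #|T|) := \matrix_(k, l) a (enum_val k) (enum_val l).
have : kermx M != 0 by rewrite -mxrank_eq0 mxrank_ker; have := rank_leq_col M; lia.
case/matrix0Pn=> k0 [k1 nz_k1].
pose d i := if i \in S then kermx M k0 (enum_rank_in s0S i) else 0.
have d_val k : d (enum_val k) = kermx M k0 k by rewrite /d enum_valP enum_valK_in.
exists d; split.
- by exists (enum_val k1); rewrite d_val.
- by move=> i; rewrite /d; case: ifP; rewrite ?eqxx.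
move=> j jT; rewrite (bigID (mem S)) /= [X in _ + X]big1 ?addr0; last first.
  by move=> i /negbTE iS; rewrite /d iS mul0r.
have := congr1 (fun N : 'M_(_, _) => N k0 (enum_rank_in jT j)) (mulmx_ker M).
rewrite !mxE => ker_j; rewrite -[RHS]ker_j [LHS]big_enum_val.
by apply: eq_bigr => k _; rewrite d_val; congr (_ * _); rewrite mxE enum_rankK_in.
Qed.

Section Headroom.
Variable R : realFieldType.
Implicit Types lo hi x d t : R.

Definition headroom lo hi x d := (if 0 < d then hi - x else lo - x) / d.

Lemma headroom_ge0 lo hi x d : lo <= x <= hi -> 0 <= headroom lo hi x d.
Proof.
case/andP=> lo_x x_hi; rewrite /headroom; case: (ltrgtP d 0) => [d_lt0|d_gt0|->].
- by apply: mulr_le0; rewrite ?subr_le0 ?invr_le0 // ltW.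
- by rewrite divr_ge0 ?subr_ge0 // ltW.
- by rewrite invr0 mulr0.
Qed.

Lemma headroomK lo hi x d :
  d != 0 -> x + headroom lo hi x d * d = if 0 < d then hi else lo.
Proof. by move=> d_neq0; rewrite divfK //; case: ifP => _; rewrite addrC subrK. Qed.

Lemma shift_within_bounds lo hi x d t :
  lo <= x <= hi -> 0 <= t <= headroom lo hi x d -> lo <= x + t * d <= hi.
Proof.
move=> x_in /andP[t_ge0 t_le]; case/andP: (x_in) => lo_x x_hi.
case: (ltrgtP d 0) => [d_lt0|d_gt0|->]; last by rewrite mulr0 addr0.
- have := headroomK lo hi x (ltr0_neq0 d_lt0); rewrite ltNge (ltW d_lt0) /=.
  have : headroom lo hi x d * d <= t * d by rewrite ler_wnM2r // ltW.
  have : t * d <= 0 by rewrite mulr_ge0_le0 // ltW.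
  lra.
- have := headroomK lo hi x (lt0r_neq0 d_gt0); rewrite d_gt0.
  have : t * d <= headroom lo hi x d * d by rewrite ler_wpM2r // ltW.
  have : 0 <= t * d by rewrite mulr_ge0 // ltW.
  lra.
Qed.

End Headroom.

Section Circulation.
Variables (V A : finType) (tail head : A -> V).

Definition endpoint a v := (tail a == v) || (head a == v).

Definition incidence a v : int := (tail a == v)%:R - (head a == v)%:R.

Definition excess (M : zmodType) (f : A -> M) v :=
  \sum_(a | tail a == v) f a - \sum_(a | head a == v) f a.

Definition circulation (M : zmodType) (f : A -> M) := forall v, excess f v = 0.

Lemma excessE (M : zmodType) (f : A -> M) v :
  excess f v = \sum_a f a *~ incidence a v.
Proof.
under eq_bigr do rewrite mulrzBr !mulrz_nat !mulrb.
by rewrite sumrB -!big_mkcond.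
Qed.

Lemma sum_excess (M : zmodType) (f : A -> M) : \sum_v excess f v = 0.
Proof.
have partition (p : A -> V) : \sum_v \sum_(a | p a == v) f a = \sum_a f a.
  by rewrite (partition_big p xpredT).
by rewrite sumrB !partition subrr.
Qed.

Lemma circulation_add_scaled (M : pzRingType) (f D : A -> M) t :
  circulation f -> circulation D -> circulation (fun a => f a + t * D a).
Proof.
move=> circ_f circ_D v; have := circ_f v; have := circ_D v; rewrite /excess.
by rewrite !big_split /= -!mulr_sumr opprD addrACA -mulrBr => -> ->; rewrite mulr0 addr0.
Qed.

Hypothesis tail_neq_head : forall a, tail a != head a.

Lemma incidence_endpoint a v :
  incidence a v = if tail a == v then 1 else if head a == v then -1 else 0.
Proof.
rewrite /incidence; case: (eqVneq (tail a) v) => [<-|_].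
  by rewrite eq_sym (negbTE (tail_neq_head a)) subr0.
by case: (head a == v); rewrite ?sub0r ?subrr.
Qed.

Lemma endpoint_count a : (\sum_v endpoint a v)%N = 2.
Proof.
rewrite (bigD1 (tail a)) // (bigD1 (head a)) 1?eq_sym ?tail_neq_head //= big1.
  by rewrite /endpoint !eqxx orbT.
move=> v /andP[tail_v head_v].
by rewrite /endpoint !(eq_sym _ v) (negbTE tail_v) (negbTE head_v).
Qed.

Lemma card_le_of_degree_ge2 (F : {set A}) (T : {set V}) :
  (forall v, v \in T -> 1 < #|[set a in F | endpoint a v]|)%N -> (#|T| <= #|F|)%N.
Proof.
move=> deg_T; rewrite -(@leq_pmul2l 2) //.
have degE v : #|[set a in F | endpoint a v]| = (\sum_(a in F) endpoint a v)%N.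
  rewrite -sum1_card [RHS]big_mkcond /= big_mkcond.
  by apply: eq_bigr => a _; rewrite inE; case: (a \in F).
have -> : (2 * #|F| = \sum_v #|[set a in F | endpoint a v]|)%N.
  under eq_bigr do rewrite degE.
  by rewrite exchange_big /= (eq_bigr _ (fun a _ => endpoint_count a)) sum_nat_const mulnC.
rewrite mulnC -sum_nat_const [X in (_ <= X)%N](bigID (mem T)) /= -[X in (X <= _)%N]addn0.
by apply: leq_add => //; apply: leq_sum => v vT; apply: deg_T.
Qed.

Variable R : archiRealFieldType.
Implicit Types f D : A -> R.

Definition nonintegral f := [set a | f a \notin Num.int].

Lemma nonintegral_neighbour f a v :
  circulation f -> a \in nonintegral f -> endpoint a v ->
  exists2 b, b != a & (b \in nonintegral f) && endpoint b v.
Proof.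
move=> circ_f; rewrite inE => fa_nonint a_v.
case: (boolP [exists b, [&& b != a, b \in nonintegral f & endpoint b v]]).
  by case/existsP=> b /and3P[b_neq_a b_nonint b_v]; exists b; rewrite ?b_nonint.
move/existsPn=> no_neighbour; case/negP: fa_nonint.
have := circ_f v; rewrite excessE (bigD1 a) //= => /eqP; rewrite addr_eq0 => /eqP fa_eq.
have : f a *~ incidence a v \is a Num.int.
  rewrite fa_eq rpredN rpred_sum // => b b_neq_a.
  have := no_neighbour b; rewrite b_neq_a inE /= negb_and negbK.
  case/orP=> [fb_int|]; first exact: rpredMz.
  rewrite incidence_endpoint /endpoint negb_or => /andP[/negbTE-> /negbTE->].
  by rewrite mulr0z rpred0.
rewrite incidence_endpoint; case: ifP => [_|tail_a]; first by rewrite mulr1z.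
by move: a_v; rewrite /endpoint tail_a /= => ->; rewrite mulrN1z rpredN.
Qed.

Lemma exists_circulation_on_nonintegral f a0 :
  circulation f -> a0 \in nonintegral f ->
  exists D, [/\ circulation D, exists a, D a != 0
    & forall a, D a != 0 -> a \in nonintegral f].
Proof.
move=> circ_f a0_nonint; set F := nonintegral f.
pose T := [set v | [exists a in F, endpoint a v]].
have deg_T v : v \in T -> (1 < #|[set a in F | endpoint a v]|)%N.
  rewrite inE => /exists_inP[a aF a_v].
  have [b b_neq_a /andP[bF b_v]] := nonintegral_neighbour circ_f aF a_v.
  have sub_ba : [set b; a] \subset [set c in F | endpoint c v].
    by apply/subsetP=> c /set2P[]->; rewrite in_set ?aF ?bF.
  by have := subset_leq_card sub_ba; rewrite cards2 b_neq_a.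
have tail_a0_T : tail a0 \in T.
  by rewrite inE; apply/exists_inP; exists a0; rewrite /endpoint ?eqxx.
pose J := T :\ tail a0.
have ltJF : (#|J| < #|F|)%N.
  by have := card_le_of_degree_ge2 deg_T; rewrite (cardsD1 (tail a0) T) tail_a0_T.
have [D [nz_D supp_D ker_D]] :=
  exists_kernel_vector (fun a v => (incidence a v)%:~R : R) ltJF.
have excess_D v : v != tail a0 -> excess D v = 0.
  move=> v_neq; rewrite excessE; case: (boolP (v \in T)) => vT.
    rewrite -[RHS](ker_D v) ?in_setD1 ?v_neq //.
    by apply: eq_bigr => a _; rewrite mulrzr.
  apply: big1 => a _; case: (eqVneq (D a) 0) => [->|/supp_D aF]; first by rewrite mul0rz.
  move: vT; rewrite inE; apply: contraNeq => nz; apply/exists_inP; exists a => //.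
  move: nz; rewrite incidence_endpoint /endpoint.
  by do 2 case: (_ == v); rewrite ?mulr0z ?eqxx.
exists D; split=> // v; case: (eqVneq v (tail a0)) => [->|]; last exact: excess_D.
(* The equation dropped at [tail a0] follows from the others, as excesses always sum to 0. *)
by have := sum_excess D; rewrite (bigD1 (tail a0)) //= big1 ?addr0.
Qed.

Lemma augment_circulation (lo hi : A -> int) f D :
  (forall a, (lo a)%:~R <= f a <= (hi a)%:~R) -> circulation f ->
  circulation D -> (exists a, D a != 0) ->
  (forall a, D a != 0 -> a \in nonintegral f) ->
  exists g : A -> R, [/\ forall a, (lo a)%:~R <= g a <= (hi a)%:~R,
    circulation g & (#|nonintegral g| < #|nonintegral f|)%N].
Proof.
move=> f_bnd circ_f circ_D [a1 nz_a1] supp_D.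
pose room a := headroom (lo a)%:~R (hi a)%:~R (f a) (D a).
have [a0 nz_a0 room_min] := arg_minP (P := [pred a | D a != 0]) room nz_a1.
pose g a := f a + room a0 * D a.
have g_a0_int : g a0 \is a Num.int.
  by rewrite /g /room headroomK //; case: ifP; rewrite intr_int.
exists g; split; last 2 first.
- exact: circulation_add_scaled.
- rewrite (cardsD1 a0 (nonintegral f)) supp_D //; apply: subset_leq_card.
  apply/subsetP=> a; rewrite in_setD1 !inE => g_nonint; apply/andP; split.
    by apply: contraNneq g_nonint => ->.
  case: (eqVneq (D a) 0) => [D_a0|/supp_D]; last by rewrite inE.
  by move: g_nonint; rewrite /g D_a0 mulr0 addr0.
move=> a; rewrite /g; case: (eqVneq (D a) 0) => [->|nz_a]; first by rewrite mulr0 addr0.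
by apply: shift_within_bounds; rewrite ?headroom_ge0 ?room_min.
Qed.

Lemma exists_integral_circulation_within (lo hi : A -> int) f :
  (forall a, (lo a)%:~R <= f a <= (hi a)%:~R) -> circulation f ->
  exists g : A -> R, [/\ forall a, (lo a)%:~R <= g a <= (hi a)%:~R,
    circulation g & forall a, g a \is a Num.int].
Proof.
have [n] := ubnP #|nonintegral f|; elim: n f => // n IHn f lt_n f_bnd circ_f.
have [f_int | [a0 a0_nonint]] := set_0Vmem (nonintegral f).
  exists f; split=> // a; apply: contraT => fa_nonint.
  by have := in_set0 a; rewrite -f_int inE fa_nonint.
have [D [circ_D nz_D supp_D]] := exists_circulation_on_nonintegral circ_f a0_nonint.
have [g [g_bnd circ_g lt_g]] := augment_circulation f_bnd circ_f circ_D nz_D supp_D.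
exact: IHn g (leq_trans lt_g lt_n) g_bnd circ_g.
Qed.

Theorem integral_circulation (lo hi : A -> int) f :
  (forall a, (lo a)%:~R <= f a <= (hi a)%:~R) -> circulation f ->
  exists g : A -> int, (forall a, lo a <= g a <= hi a) /\ circulation g.
Proof.
move=> f_bnd circ_f.
have [g [g_bnd circ_g g_int]] := exists_integral_circulation_within f_bnd circ_f.
have floorE a : (Num.floor (g a))%:~R = g a by apply/floorK/g_int.
exists (fun a => Num.floor (g a)); split=> [a|v].
  by rewrite -!(ler_int R) floorE.
apply: (@intr_inj R); rewrite /excess rmorphB !rmorph_sum /=.
under eq_bigr do rewrite floorE; under [X in _ - X]eq_bigr do rewrite floorE.
exact: circ_g.
Qed.

End Circulation.

Section DoubleCover.
Variables (V E : finType) (src dst : E -> V) (col : E -> bool).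

(* Arc (e, i) of the cover joins (src e, i) and (dst e, ~~ i); red arcs leave the [true]
   side and blue arcs leave the [false] side. *)
Definition cover_end (b : bool) (a : E * bool) : V * bool :=
  (if a.2 == b then src a.1 else dst a.1, b).
Definition cover_tail a := cover_end (col a.1) a.
Definition cover_head a := cover_end (~~ col a.1) a.

Lemma cover_tail_neq_head a : cover_tail a != cover_head a.
Proof. by rewrite xpair_eqE; case: (col a.1); rewrite andbF. Qed.

Definition alt_defect (M : zmodType) (x : E -> M) v :=
  \sum_(e | incident src dst v e && col e) x e
  - \sum_(e | incident src dst v e && ~~ col e) x e.

Hypothesis noloop : forall e, src e != dst e.

Lemma sum_endpoint_choice (M : nmodType) e v b (F : bool -> M) :
  \sum_(i | (if i == b then src e else dst e) == v) F i
  = if incident src dst v e then F ((src e == v) == b) else 0.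
Proof.
rewrite big_mkcond big_bool /incident; case: b => /=;
  case: (eqVneq (src e) v) => [<-|_]; rewrite ?[dst e == src e]eq_sym ?(negbTE (noloop e));
  by case: (dst e == _); rewrite ?addr0 ?add0r.
Qed.

Lemma sum_cover_end (M : nmodType) (h : E * bool -> M) (P : pred E) v b :
  \sum_(a | P a.1 && (cover_end b a == (v, b))) h a
  = \sum_(e | incident src dst v e && P e) h (e, (src e == v) == b).
Proof.
transitivity (\sum_(e | P e) \sum_(i | cover_end b (e, i) == (v, b)) h (e, i)).
  by rewrite pair_big_dep; apply: eq_big => -[].
rewrite [LHS]big_mkcond [RHS]big_mkcond; apply: eq_bigr => e _ /=.
under eq_bigl do rewrite xpair_eqE eqxx andbT.
by rewrite sum_endpoint_choice; case: (P e); rewrite ?andbT ?andbF.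
Qed.

Lemma excess_cover (M : zmodType) (h : E * bool -> M) v b :
  excess cover_tail cover_head h (v, b) =
  if b then alt_defect (fun e => h (e, src e == v)) v
  else - alt_defect (fun e => h (e, src e != v)) v.
Proof.
have headE a : (cover_head a == (v, b)) = (col a.1 != b) && (cover_end b a == (v, b)).
  rewrite /cover_head /cover_end !xpair_eqE.
  by case: (col a.1); case: b; rewrite ?andbF ?andbT.
have tailE a : (cover_tail a == (v, b)) = (col a.1 == b) && (cover_end b a == (v, b)).
  by rewrite /cover_tail /cover_end !xpair_eqE eqxx andbT andbC; case: eqVneq => [->|].
rewrite /excess (eq_bigl _ _ tailE) (eq_bigl _ _ headE).
rewrite (@sum_cover_end _ h (fun e => col e == b)).
rewrite (@sum_cover_end _ h (fun e => col e != b)) /alt_defect.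
case: {tailE headE}b; rewrite ?opprB; congr (_ - _);
  by apply: eq_big => e; rewrite ?eqb_id ?eqbF_neg ?negbK.
Qed.

Lemma alt_defect_cover_sum (M : zmodType) (h : E * bool -> M) v :
  alt_defect (fun e => h (e, true) + h (e, false)) v
  = excess cover_tail cover_head h (v, true)
    - excess cover_tail cover_head h (v, false).
Proof.
rewrite !excess_cover opprK /alt_defect addrACA -opprD -!big_split /=.
by congr (_ - _); apply: eq_bigr => e _; case: (src e == v); rewrite // addrC.
Qed.

End DoubleCover.

Theorem theorem3p1 (V E : finType) (src dst : E -> V)
  (noloop : forall e, src e != dst e) (col : E -> bool) (l u : E -> nat)
  (hlu : forall e, (l e <= u e)%N) :
  (exists x : E -> rat, in_alt_cone src dst col x /\
     forall e, (l e)%:R <= x e <= (u e)%:R) ->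
  exists y : E -> int, in_alt_cone src dst col y /\
     forall e, (2 * l e)%:R <= y e <= (2 * u e)%:R.
Proof.
move=> [x [[x_ge0 x_alt] x_bnd]].
have alt_x v : alt_defect src dst col x v = 0 by rewrite /alt_defect x_alt subrr.
have circ_x :
    circulation (cover_tail src dst col) (cover_head src dst col) (fun a => x a.1).
  by case=> v b; rewrite excess_cover //; case: b; rewrite alt_x ?oppr0.
have [g [g_bnd circ_g]] := integral_circulation (@cover_tail_neq_head V E src dst col)
  (lo := fun a => (l a.1)%:Z) (hi := fun a => (u a.1)%:Z) (fun a => x_bnd a.1) circ_x.
exists (fun e => g (e, true) + g (e, false)); split; [split|] => [e|v|e].
- by have /= := g_bnd (e, true); have /= := g_bnd (e, false); lia.
- apply/eqP; rewrite -subr_eq0; apply/eqP.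
  by rewrite -/(alt_defect src dst col _ v) alt_defect_cover_sum // !circ_g subrr.
- by have /= := g_bnd (e, true); have /= := g_bnd (e, false); lia.
Qed.
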